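(* Let $S$ be an orthodox semigroup with an adequate (and hence inverse) transversal $S^0$. Then for all $x,y\in S$, $\overline{xy}=\overline{x}\,\overline{y}$.
   Context: An orthodox semigroup is a regular semigroup whose idempotents form a subsemigroup. For a semigroup $S$, $S^1$ is $S$ with an identity adjoined, $\mathcal{L},\mathcal{R}$ Green's relations. $\mathcal{R}^\ast=\{(a,b):\forall x,y\in S^1,\ xa=ya\iff xb=yb\}$, $\mathcal{L}^\ast=\{(a,b):\forall x,y\in S^1,\ ax=ay\iff bx=by\}$. $S$ is abundant if each $\mathcal{R}^\ast$- and $\mathcal{L}^\ast$-class contains an idempotent (regular semigroups are abundant); adequate if also idempotents commute (then $a^+$, $a^\ast$ are the unique idempotents $\mathcal{R}^\ast$-, resp. $\mathcal{L}^\ast$-related to $a$). An abundant subsemigroup $U$ of abundant $S$ is a $\ast$-subsemigroup if $\mathcal{L}^\ast(U)=\mathcal{L}^\ast(S)\cap(U\times U)$, $\mathcal{R}^\ast(U)=\mathcal{R}^\ast(S)\cap(U\times U)$. An adequate $\ast$-subsemigroup $S^0$ of abundant $S$ is an adequate transversal if each $x\in S$ has a unique $\overline{x}\in S^0$ and idempotents $e,f$ of $S$ with $x=e\overline{x}f$, $e\,\mathcal{L}\,\overline{x}^+$, $f\,\mathcal{R}\,\overline{x}^\ast$. *)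

Set Implicit Arguments.

Section Semigroups.
Variable T : Type.
Variable mul : T -> T -> T.

Definition associative_op : Prop :=
  forall a b c, mul a (mul b c) = mul (mul a b) c.

Definition idempotent (e : T) : Prop := mul e e = e.

Definition regular : Prop := forall a, exists x, mul (mul a x) a = a.

Definition orthodox : Prop :=
  regular /\ (forall e f, idempotent e -> idempotent f -> idempotent (mul e f)).

(* S^1 : elements of [option T], [None] is the adjoined identity *)
Definition lmul1 (x : option T) (a : T) : T :=
  match x with None => a | Some x => mul x a end.
Definition rmul1 (a : T) (x : option T) : T :=
  match x with None => a | Some x => mul a x end.

Definition in1 (U : T -> Prop) (x : option T) : Prop :=
  match x with None => True | Some x => U x end.

Definition greenL (a b : T) : Prop :=
  exists x y : option T, a = lmul1 x b /\ b = lmul1 y a.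
Definition greenR (a b : T) : Prop :=
  exists x y : option T, a = rmul1 b x /\ b = rmul1 a y.

Definition RstarIn (U : T -> Prop) (a b : T) : Prop :=
  forall x y : option T, in1 U x -> in1 U y ->
    (lmul1 x a = lmul1 y a <-> lmul1 x b = lmul1 y b).
Definition LstarIn (U : T -> Prop) (a b : T) : Prop :=
  forall x y : option T, in1 U x -> in1 U y ->
    (rmul1 a x = rmul1 a y <-> rmul1 b x = rmul1 b y).

Definition whole : T -> Prop := fun _ => True.
Definition Rstar := RstarIn whole.
Definition Lstar := LstarIn whole.

Definition subsemigroup (U : T -> Prop) : Prop :=
  forall a b, U a -> U b -> U (mul a b).

Definition abundantIn (U : T -> Prop) : Prop :=
  forall a, U a ->
    (exists e, U e /\ idempotent e /\ RstarIn U a e) /\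
    (exists f, U f /\ idempotent f /\ LstarIn U a f).

Definition adequateIn (U : T -> Prop) : Prop :=
  abundantIn U /\
  (forall e f, U e -> U f -> idempotent e -> idempotent f -> mul e f = mul f e).

Definition star_subsemigroup (U : T -> Prop) : Prop :=
  subsemigroup U /\ abundantIn U /\
  (forall a b, U a -> U b -> (LstarIn U a b <-> Lstar a b)) /\
  (forall a b, U a -> U b -> (RstarIn U a b <-> Rstar a b)).

(* a^+ : the (unique, in an adequate U) idempotent of U R*-related to a;
   a^* : the idempotent of U L*-related to a *)
Definition is_plus (U : T -> Prop) (a p : T) : Prop :=
  U p /\ idempotent p /\ RstarIn U a p.
Definition is_star (U : T -> Prop) (a q : T) : Prop :=
  U q /\ idempotent q /\ LstarIn U a q.

(* xb is a "bar" of x w.r.t. S0: xb ∈ S0 and x = e xb f with idempotents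
   e, f of S, e L xb^+, f R xb^* *)
Definition decomp (S0 : T -> Prop) (x xb : T) : Prop :=
  S0 xb /\
  exists e f p q, idempotent e /\ idempotent f /\
    is_plus S0 xb p /\ is_star S0 xb q /\
    x = mul (mul e xb) f /\ greenL e p /\ greenR f q.

Definition adequate_transversal (S0 : T -> Prop) : Prop :=
  adequateIn S0 /\ star_subsemigroup S0 /\
  forall x, exists xb, decomp S0 x xb /\ (forall xb', decomp S0 x xb' -> xb' = xb).

End Semigroups.

From Stdlib Require Import Setoid.
Set Implicit Arguments.

(* Write x = e a f and y = g b h with a, b in S0, and let k, l be inverses of a, b
   in S with a k = a^+, k a = a^*, b l = b^+, l b = b^*.  Since a^* and b^+ are
   commuting idempotents of S0 and the idempotents of S form a band,
     x y = (e a f g k) (a b) (l f g b h),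
   with idempotent outer factors E and F.  If t = (ab)^+ and t' = (ab)^*, then
   x y = (E t) (a b) (t' F), and E t is L-related to t because the idempotent
   m = a b^+ k of the R-class of a b satisfies m E = m and m t = t; dually for t' F. *)

Section Semigroup.
Variables (T : Type) (mul : T -> T -> T).
Hypothesis mulA : associative_op mul.
Local Infix "·" := mul (at level 45, right associativity).

Lemma mulA_rw (u v w : T) : u · v = w -> forall x, u · v · x = w · x.
Proof. intros E x. rewrite mulA, E. reflexivity. Qed.

Lemma idem_mul_rw (u v : T) :
  idempotent mul (u · v) -> forall x, u · v · u · v · x = u · v · x.
Proof. intros H x. rewrite !(mulA u v), mulA, H. reflexivity. Qed.

Lemma Rstar_fixP (a p u : T) : Rstar mul a p -> (u · a = a <-> u · p = p).
Proof. intros H. exact (H (Some u) None I I). Qed.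

Lemma Lstar_fixP (a q u : T) : Lstar mul a q -> (a · u = a <-> q · u = q).
Proof. intros H. exact (H (Some u) None I I). Qed.

Lemma greenL_idem (e p : T) :
  idempotent mul e -> idempotent mul p -> greenL mul e p -> e · p = e /\ p · e = p.
Proof.
  intros He Hp [[x|] [[y|] [E1 E2]]]; simpl in *; split.
  all: try (rewrite E1, <- mulA, Hp; reflexivity).
  all: try (rewrite E2, <- mulA, He; reflexivity).
  all: try (rewrite E1; exact Hp).
  all: try (rewrite E2; exact He).
Qed.

Lemma greenR_idem (f q : T) :
  idempotent mul f -> idempotent mul q -> greenR mul f q -> q · f = f /\ f · q = q.
Proof.
  intros Hf Hq [[x|] [[y|] [E1 E2]]]; simpl in *; split.
  all: try (rewrite E1, mulA, Hq; reflexivity).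
  all: try (rewrite E2, mulA, Hf; reflexivity).
  all: try (rewrite E1; exact Hq).
  all: try (rewrite E2; exact Hf).
Qed.

Lemma greenL_intro (u t : T) : u · t = u -> t · u = t -> greenL mul u t.
Proof. intros ut tu. exists (Some u), (Some t). simpl. auto. Qed.

Lemma greenR_intro (u t : T) : t · u = u -> u · t = t -> greenR mul u t.
Proof. intros tu ut. exists (Some u), (Some t). simpl. auto. Qed.

Lemma mul_idem_greenL (E t m : T) :
  idempotent mul t -> idempotent mul (E · t) -> m · E = m -> m · t = t ->
  greenL mul (E · t) t.
Proof.
  intros Ht HEt mE mt. apply greenL_intro.
  - rewrite <- mulA, Ht. reflexivity.
  - rewrite <- mt at 1. rewrite <- mE at 1.
    rewrite <- !mulA, (mulA E t), HEt, mulA, mE, mt. reflexivity.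
Qed.

Lemma mul_idem_greenR (F t m : T) :
  idempotent mul t -> idempotent mul (t · F) -> F · m = m -> t · m = t ->
  greenR mul (t · F) t.
Proof.
  intros Ht HtF Fm tm. apply greenR_intro.
  - rewrite mulA, Ht. reflexivity.
  - rewrite <- tm at 2. rewrite <- Fm at 1.
    rewrite !mulA, <- (mulA (t · F) t), HtF, <- mulA, Fm, tm. reflexivity.
Qed.

Record inverse_pair (a k p q : T) : Prop := InversePair {
  inverse_mulr : a · k = p;
  inverse_mull : k · a = q;
  inverse_aka : a · k · a = a;
  inverse_kak : k · a · k = k }.

Section InversePair.
Variables a k p q : T.
Hypothesis Hak : inverse_pair a k p q.

Lemma inverse_pair_fixl : p · a = a.
Proof. rewrite <- (inverse_mulr Hak), <- mulA. exact (inverse_aka Hak). Qed.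

Lemma inverse_pair_fixr : a · q = a.
Proof. rewrite <- (inverse_mull Hak). exact (inverse_aka Hak). Qed.

Lemma inverse_pair_absl : q · k = k.
Proof. rewrite <- (inverse_mull Hak), <- mulA. exact (inverse_kak Hak). Qed.

Lemma inverse_pair_absr : k · p = k.
Proof. rewrite <- (inverse_mulr Hak). exact (inverse_kak Hak). Qed.

Lemma inverse_pair_idem_l : idempotent mul p.
Proof.
  unfold idempotent. rewrite <- (inverse_mulr Hak) at 2.
  rewrite mulA, inverse_pair_fixl. exact (inverse_mulr Hak).
Qed.

Lemma inverse_pair_idem_r : idempotent mul q.
Proof.
  unfold idempotent. rewrite <- (inverse_mull Hak) at 2.
  rewrite mulA, inverse_pair_absl. exact (inverse_mull Hak).
Qed.

End InversePair.

(* For an inner inverse z of a, the element q z a z p is an inverse of a. *)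
Lemma Rstar_Lstar_inverse_pair (a z p q : T) :
  (a · z) · a = a -> Rstar mul a p -> Lstar mul a q ->
  idempotent mul p -> idempotent mul q -> exists k, inverse_pair a k p q.
Proof.
  intros aza aRp aLq Hp Hq.
  assert (azp : (a · z) · p = p) by exact (proj1 (Rstar_fixP _ aRp) aza).
  assert (qza : q · z · a = q) by (apply (Lstar_fixP _ aLq); rewrite mulA; exact aza).
  assert (pa : p · a = a) by exact (proj2 (Rstar_fixP _ aRp) Hp).
  assert (aq : a · q = a) by exact (proj2 (Lstar_fixP _ aLq) Hq).
  assert (ak : a · q · z · a · z · p = p)
    by (rewrite (mulA_rw aq), !mulA, aza; exact azp).
  assert (ka : (q · z · a · z · p) · a = q)
    by (rewrite <- !mulA, pa, (mulA a z a), aza; exact qza).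
  exists (q · z · a · z · p). split.
  - exact ak.
  - exact ka.
  - rewrite ka. exact aq.
  - rewrite ak, <- !mulA, Hp. reflexivity.
Qed.

Section Product.
Variables a k p q b l r s e f g h : T.
Hypotheses (Hak : inverse_pair a k p q) (Hbl : inverse_pair b l r s).
Hypotheses (He : idempotent mul e) (Hf : idempotent mul f).
Hypotheses (Hg : idempotent mul g) (Hh : idempotent mul h).
Hypotheses (eLp : greenL mul e p) (fRq : greenR mul f q).
Hypotheses (gLr : greenL mul g r) (hRs : greenR mul h s).
Hypothesis qr : q · r = r · q.
Hypothesis band :
  forall u v, idempotent mul u -> idempotent mul v -> idempotent mul (u · v).

Let ka := inverse_mull Hak.
Let aq := inverse_pair_fixr Hak.
Let qk := inverse_pair_absl Hak.
Let bl := inverse_mulr Hbl.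
Let rb := inverse_pair_fixl Hbl.
Let lr := inverse_pair_absr Hbl.
Let pe := proj2 (greenL_idem He (inverse_pair_idem_l Hak) eLp).
Let qf := proj1 (greenR_idem Hf (inverse_pair_idem_r Hak) fRq).
Let fq := proj2 (greenR_idem Hf (inverse_pair_idem_r Hak) fRq).
Let gr := proj1 (greenL_idem Hg (inverse_pair_idem_l Hbl) gLr).
Let rg := proj2 (greenL_idem Hg (inverse_pair_idem_l Hbl) gLr).
Let hs := proj2 (greenR_idem Hh (inverse_pair_idem_r Hbl) hRs).
Let fg := idem_mul_rw (band Hf Hg).
Let gf := idem_mul_rw (band Hg Hf).

Lemma inverse_greenL_absr : k · e = k.
Proof. rewrite <- (inverse_pair_absr Hak), <- mulA, pe. reflexivity. Qed.

Lemma inverse_greenR_absl : h · l = l.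
Proof. rewrite <- (inverse_pair_absl Hbl), mulA, hs. reflexivity. Qed.

(* The band identity g f g f = g f lets r and q pass over f g. *)
Lemma band_commute_rw (x : T) : r · f · g · q · x = r · q · x.
Proof.
  rewrite <- fq at 1. rewrite <- rg at 1.
  rewrite <- !mulA, gf, (mulA_rw rg), (mulA_rw fq). reflexivity.
Qed.

Let E := e · a · f · g · k.
Let F := l · f · g · b · h.
Let m := a · r · k.
Let m' := l · q · b.

Lemma factor_idem_l : idempotent mul E.
Proof.
  unfold idempotent, E. rewrite <- !mulA.
  rewrite (mulA_rw inverse_greenL_absr), (mulA_rw ka), (mulA_rw qf), fg.
  reflexivity.
Qed.

Lemma factor_idem_r : idempotent mul F.
Proof.
  unfold idempotent, F. rewrite <- !mulA.
  rewrite (mulA_rw inverse_greenR_absl), (mulA_rw bl), (mulA_rw gr), fg.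
  reflexivity.
Qed.

Lemma factor_product : e · a · f · g · b · h = E · a · b · F.
Proof.
  unfold E, F. rewrite <- !mulA.
  rewrite (mulA_rw ka), (mulA_rw bl), (mulA_rw qr), <- !mulA.
  rewrite (mulA_rw gr), (mulA_rw qf), fg. reflexivity.
Qed.

Lemma mul_ab_mid : a · r · q · b = a · b.
Proof. rewrite (mulA_rw (eq_sym qr)), <- mulA, (mulA_rw aq), rb. reflexivity. Qed.

Lemma ab_fixed_l : m · a · b = a · b.
Proof.
  unfold m. rewrite <- !mulA, (mulA_rw ka). exact mul_ab_mid.
Qed.

Lemma ab_fixed_r : (a · b) · m' = a · b.
Proof.
  unfold m'. rewrite <- !mulA, (mulA_rw bl). exact mul_ab_mid.
Qed.

Lemma factor_absorbed_l : m · E = m.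
Proof.
  unfold m, E. rewrite <- !mulA.
  rewrite (mulA_rw inverse_greenL_absr), (mulA_rw ka), (mulA_rw qf).
  rewrite <- qk at 1. rewrite band_commute_rw, qk. reflexivity.
Qed.

Lemma factor_absorbed_r : F · m' = m'.
Proof.
  unfold F, m'. rewrite <- !mulA.
  rewrite (mulA_rw inverse_greenR_absl), (mulA_rw bl), (mulA_rw gr).
  rewrite <- lr at 1. rewrite <- !mulA, band_commute_rw, (mulA_rw lr).
  reflexivity.
Qed.

Lemma product_factorization (t t' : T) :
  idempotent mul t -> idempotent mul t' -> Rstar mul (a · b) t -> Lstar mul (a · b) t' ->
  exists E' F', idempotent mul E' /\ idempotent mul F' /\
    ((e · a) · f) · ((g · b) · h) = (E' · (a · b)) · F' /\
    greenL mul E' t /\ greenR mul F' t'.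
Proof.
  intros Ht Ht' abRt abLt'.
  assert (mt : m · t = t) by exact (proj1 (Rstar_fixP _ abRt) ab_fixed_l).
  assert (tm : t' · m' = t') by exact (proj1 (Lstar_fixP _ abLt') ab_fixed_r).
  assert (tab : t · a · b = a · b) by exact (proj2 (Rstar_fixP _ abRt) Ht).
  assert (abt : (a · b) · t' = a · b) by exact (proj2 (Lstar_fixP _ abLt') Ht').
  exists (E · t), (t' · F). repeat split.
  - exact (band factor_idem_l Ht).
  - exact (band Ht' factor_idem_r).
  - rewrite <- !mulA, factor_product, (mulA a b (t' · F)), (mulA_rw abt), (mulA t), tab.
    rewrite <- mulA. reflexivity.
  - exact (mul_idem_greenL Ht (band factor_idem_l Ht) factor_absorbed_l mt).
  - exact (mul_idem_greenR Ht' (band Ht' factor_idem_r) factor_absorbed_r tm).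
Qed.

End Product.

Section Transversal.
Variable S0 : T -> Prop.
Hypothesis Hstar : star_subsemigroup mul S0.

Lemma is_plus_Rstar (a p : T) : S0 a -> is_plus mul S0 a p -> Rstar mul a p.
Proof. intros Sa [Sp [_ H]]. exact (proj1 (proj2 (proj2 (proj2 Hstar)) a p Sa Sp) H). Qed.

Lemma is_star_Lstar (a q : T) : S0 a -> is_star mul S0 a q -> Lstar mul a q.
Proof. intros Sa [Sq [_ H]]. exact (proj1 (proj1 (proj2 (proj2 Hstar)) a q Sa Sq) H). Qed.

Lemma decomp_inverse_pair (x a : T) :
  regular mul -> decomp mul S0 x a ->
  exists e f p q k, S0 p /\ S0 q /\ idempotent mul e /\ idempotent mul f /\
    greenL mul e p /\ greenR mul f q /\ inverse_pair a k p q /\ x = (e · a) · f.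
Proof.
  intros Hreg [Sa (e & f & p & q & He & Hf & Hp & Hq & Hx & eLp & fRq)].
  destruct (Hreg a) as [z aza].
  destruct (Rstar_Lstar_inverse_pair aza (is_plus_Rstar Sa Hp) (is_star_Lstar Sa Hq)
              (proj1 (proj2 Hp)) (proj1 (proj2 Hq))) as [k Hak].
  exists e, f, p, q, k. destruct Hp as [Sp _], Hq as [Sq _]. auto 8.
Qed.

End Transversal.

End Semigroup.

Theorem corollary2p6 (T : Type) (mul : T -> T -> T)
  (Hassoc : associative_op mul) (Horth : orthodox mul)
  (S0 : T -> Prop) (HS0 : adequate_transversal mul S0) :
  forall x y xb yb : T,
    decomp mul S0 x xb -> decomp mul S0 y yb ->
    decomp mul S0 (mul x y) (mul xb yb).
Proof.
  intros x y a b Hx Hy.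
  destruct Horth as [Hreg Hband].
  destruct HS0 as [[_ Hcomm] [Hstar _]].
  pose proof (proj1 Hx) as Sa. pose proof (proj1 Hy) as Sb.
  destruct (decomp_inverse_pair Hassoc Hstar Hreg Hx)
    as (e & f & p & q & k & _ & Sq & He & Hf & eLp & fRq & Hak & ->).
  destruct (decomp_inverse_pair Hassoc Hstar Hreg Hy)
    as (g & h & r & s & l & Sr & _ & Hg & Hh & gLr & hRs & Hbl & ->).
  assert (Sab : S0 (mul a b)) by exact (proj1 Hstar a b Sa Sb).
  destruct (proj1 (proj2 Hstar) _ Sab) as [[t Ht] [t' Ht']].
  assert (qr : mul q r = mul r q).
  { apply Hcomm; auto.
    - exact (inverse_pair_idem_r Hassoc Hak).
    - exact (inverse_pair_idem_l Hassoc Hbl). }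
  destruct (product_factorization Hassoc Hak Hbl He Hf Hg Hh eLp fRq gLr hRs qr Hband
              (proj1 (proj2 Ht)) (proj1 (proj2 Ht'))
              (is_plus_Rstar Hstar Sab Ht) (is_star_Lstar Hstar Sab Ht'))
    as (E & F & HE & HF & Hxy & ELt & FRt').
  split; [exact Sab|].
  exists E, F, t, t'. auto 8.
Qed.
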